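(* Let $0\le\beta<\alpha<\infty$ and $1<p<q<\infty$ with $\frac1p-\frac1q=\frac{\alpha-\beta}{\mathbf N}$. Suppose that to each cube $Q\subseteq\mathbb R^N$ a function $h^Q$ defined on $Q$ is associated, and for $\gamma\ge0$ set $$h_\gamma(x)=\sup_{Q\ni x}\frac{1}{\omega(Q)^{1+\gamma/\mathbf N}}\int_Q|h^Q(y)|\,d\omega(y),\qquad x\in\mathbb R^N,$$ the supremum over all cubes $Q$ containing $x$. Then $\|h_\beta\|_{L^q_\omega}\le C\|h_\alpha\|_{L^p_\omega}$, where $C$ depends only on $p,q,\alpha$ and $\omega$.
   Context: Let $R\subset\mathbb R^N\setminus\{0\}$ be a root system (finite, invariant under the reflections $\sigma_\alpha(x)=x-2\langle x,\alpha\rangle\alpha/\|\alpha\|^2$), normalized so that $\langle\alpha,\alpha\rangle=2$; $G$ the generated reflection group; $\kappa\ge0$ a $G$-invariant multiplicity function; $d\omega(x)=\prod_{\alpha\in R}|\langle\alpha,x\rangle|^{\kappa(\alpha)}dx$; $\mathbf N=N+\sum_{\alpha\in R}\kappa(\alpha)$; $L^p_\omega=L^p(\mathbb R^N,\omega)$. Cubes are Euclidean cubes in $\mathbb R^N$. *)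

From HB Require Import structures.
From mathcomp Require Import all_boot all_order all_algebra.
From mathcomp Require Import all_classical all_reals all_analysis.
Set Implicit Arguments. Unset Strict Implicit. Unset Printing Implicit Defensive.
Import Order.TTheory GRing.Theory Num.Theory.
Local Open Scope classical_set_scope.
Local Open Scope ring_scope.

Section defs.
Variables (R : realType) (N : nat).
Notation vec := (N.-tuple R).

Definition dotp (x y : vec) : R := \sum_(i < N) tnth x i * tnth y i.

Definition refl (a x : vec) : vec :=
  [tuple tnth x i - (2 * dotp x a / dotp a a) * tnth a i | i < N].

Definition root_system (rs : seq vec) : Prop :=
  uniq rs /\
  (forall a, a \in rs -> a != [tuple 0 | i < N]) /\
  (forall a b, a \in rs -> b \in rs -> refl a b \in rs) /\
  (forall a, a \in rs -> dotp a a = 2).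

(* action of the element of the reflection group G given by the word
   s (a list of roots) : the product of the reflections sigma_a, a in s *)
Definition Gact (s : seq vec) (x : vec) : vec := foldr refl x s.

Definition multiplicity (rs : seq vec) (kappa : vec -> R) : Prop :=
  (forall a, a \in rs -> 0 <= kappa a) /\
  (forall (s : seq vec) a, all (fun b => b \in rs) s -> a \in rs ->
     kappa (Gact s a) = kappa a).

(* density of d omega w.r.t. Lebesgue measure *)
Definition weight (rs : seq vec) (kappa : vec -> R) (x : vec) : R :=
  \prod_(a <- rs) (`|dotp a x| `^ kappa a).

Definition homdim (rs : seq vec) (kappa : vec -> R) : R :=
  N%:R + \sum_(a <- rs) kappa a.

Definition cube (a : vec) (l : R) : set vec :=
  [set x | forall i : 'I_N, tnth a i <= tnth x i <= tnth a i + l].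

Definition box (a b : vec) : set vec :=
  [set x | forall i : 'I_N, tnth a i <= tnth x i <= tnth b i].

Definition is_lebesgue (lam : {measure set vec -> \bar R}) : Prop :=
  forall a b : vec, (forall i, tnth a i <= tnth b i) ->
    lam (box a b) = (\prod_(i < N) (tnth b i - tnth a i))%:E.

Variables (lam : {measure set vec -> \bar R}) (rs : seq vec) (kappa : vec -> R).

Definition omega (A : set vec) : \bar R :=
  (\int[lam]_(x in A) (weight rs kappa x)%:E)%E.

(* h_gamma(x) = sup_{Q cube, x in Q} omega(Q)^{-1-gamma/bN} int_Q |h^Q| d omega,
   where h a l is the function h^Q attached to the cube Q = cube a l (l > 0) *)
Definition hgamma (h : vec -> R -> vec -> R) (gamma : R) (x : vec) : \bar R :=
  ereal_sup [set r | exists a l, 0 < l /\ cube a l x /\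
     r = (((fine (omega (cube a l))) `^ (- (1 + gamma / homdim rs kappa)))%:E *
         (\int[lam]_(y in cube a l) (`|h a l y| * weight rs kappa y)%:E))%E ].

Definition Lpw (p : R) (f : vec -> \bar R) : \bar R :=
  ((\int[lam]_x ((`|f x|)%E `^ p * (weight rs kappa x)%:E)) `^ (p^-1))%E.

End defs.

From HB Require Import structures.
From mathcomp Require Import all_boot all_order all_algebra.
From mathcomp Require Import all_classical all_reals all_analysis.
From mathcomp Require Import ring.
Import Order.TTheory GRing.Theory Num.Theory.
Local Open Scope classical_set_scope.
Local Open Scope ring_scope.

(* The estimate holds with C = 1 and follows from a pointwise bound of
   Hedberg type.  Put th = 1/p - 1/q = (alpha - beta)/bN and
   S = int h_alpha^p d omega.  For a cube Q containing x, write the average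
   defining h_beta as omega(Q)^th times the average A_alpha(Q) defining
   h_alpha.  Since A_alpha(Q) <= h_alpha on all of Q, Chebyshev's inequality
   gives A_alpha(Q)^p omega(Q) <= S, and together with A_alpha(Q) <= h_alpha(x)
   this yields  h_beta(x) <= h_alpha(x)^(p/q) S^th.  Raising to the power q
   and integrating gives  int h_beta^q d omega <= S^(th q) S = S^(q/p). *)

Section nonnegative_integral.
Context d (T : measurableType d) (R : realType).
Variable mu : {measure set T -> \bar R}.
Local Open Scope ereal_scope.
Import HBNNSimple.

(* Monotonicity of the integral of nonnegative functions; no measurability
   is needed since the integral is the supremum over simple minorants. *)
Lemma ge0_le_integralT (f g : T -> \bar R) : (forall x, 0 <= f x) ->
  (forall x, f x <= g x) -> \int[mu]_x f x <= \int[mu]_x g x.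
Proof.
move=> f0 fg; have g0 x : 0 <= g x by apply: le_trans (fg x).
rewrite !ge0_integralTE//; apply: ereal_sup_le => _ [s sf <-] /=.
by exists s => // x; apply: le_trans (fg x).
Qed.

(* Homogeneity of the integral of nonnegative functions, again without
   measurability: scaling by c > 0 is a bijection on simple minorants. *)
Lemma ge0_integralZlT (f : T -> \bar R) (c : R) : (0 <= c)%R ->
  (forall x, 0 <= f x) -> \int[mu]_x (c%:E * f x) = c%:E * \int[mu]_x f x.
Proof.
move=> c0 f0; have [->|c_neq0] := eqVneq c 0%R.
  by rewrite mul0e -(integral0 mu setT); apply: eq_integral => x _; rewrite mul0e.
have c_gt0 : (0 < c)%R by rewrite lt0r c_neq0.
have cf0 x : 0 <= c%:E * f x by rewrite mule_ge0.
rewrite !ge0_integralTE// -ereal_sup_pZl//; congr ereal_sup.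
apply/seteqP; split => r /=.
- move=> [s sf <-] {r}; have ci0 : (0 <= c^-1)%R by rewrite invr_ge0 ltW.
  exists (sintegral mu (scale_nnsfun s ci0)).
    exists (scale_nnsfun s ci0) => // x /=.
    by rewrite EFinM -(@lee_pmul2l _ c%:E) ?lte_fin// muleA -EFinM mulfV// mul1r.
  by rewrite -sintegralrM; apply: eq_sintegral => x /=; rewrite mulrA mulfV// mul1r.
- move=> [_ [s sf <-] <-] {r}; exists (scale_nnsfun s (ltW c_gt0)).
    by move=> x /=; rewrite EFinM lee_pmul2l ?lte_fin.
  by rewrite -sintegralrM.
Qed.

End nonnegative_integral.

(* The scalar interpolation inequality behind the pointwise bound: with
   th = 1/p - 1/q, if t <= u and t^p m <= s then m^th t <= u^(p/q) s^th.
   Indeed t = t^(p/q) t^(p th) and (t^p m)^th <= s^th. *)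
Lemma interpolation_bound (R : realType) (p q t m u s : R) :
  0 < p -> p < q -> 0 <= t -> 0 < m -> t <= u -> t `^ p * m <= s ->
  m `^ (p^-1 - q^-1) * t <= u `^ (p / q) * s `^ (p^-1 - q^-1).
Proof.
move=> p0 pq t0 m0 tu tms; set th := p^-1 - q^-1.
have q0 : 0 < q by apply: lt_trans pq.
have th0 : 0 <= th by rewrite subr_ge0 lef_pV2 ?posrE// ltW.
have mono r a b : 0 <= r -> 0 <= a -> a <= b -> a `^ r <= b `^ r.
  by move=> r0 a0 ab; apply: ge0_ler_powR; rewrite ?nnegrE//; apply: le_trans ab.
have [->|t_neq0] := eqVneq t 0; first by rewrite mulr0 mulr_ge0 ?powR_ge0.
have split_t : t = t `^ (p / q) * t `^ (p * th).
  rewrite -powRD ?t_neq0 ?implybT// -[LHS]powRr1//.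
  by congr (t `^ _); rewrite /th mulrBr mulfV ?gt_eqF// addrC subrK.
rewrite {1}split_t mulrCA; apply: ler_pM; rewrite ?mulr_ge0 ?powR_ge0//.
  by apply: mono => //; apply: divr_ge0; apply: ltW.
rewrite powRrM -powRM ?powR_ge0 ?(ltW m0)// mulrC.
by apply: mono; rewrite ?mulr_ge0 ?powR_ge0 ?(ltW m0).
Qed.

Section fractional_maximal.
Variables (R : realType) (N : nat) (lam : {measure set (N.-tuple R) -> \bar R}).
Variables (rs : seq (N.-tuple R)) (kappa : N.-tuple R -> R).
Variable h : N.-tuple R -> R -> N.-tuple R -> R.
Local Notation W := (weight rs kappa).
Local Notation om := (omega lam rs kappa).
Local Notation H := (homdim rs kappa).
Local Notation hgam := (hgamma lam rs kappa h).
Local Open Scope ereal_scope.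

Definition cube_mass a l : \bar R :=
  \int[lam]_(y in cube a l) (`|h a l y| * W y)%:E.

Definition cube_average gamma a l : \bar R :=
  ((fine (om (cube a l))) `^ (- (1 + gamma / H)))%:E * cube_mass a l.

Definition Lp_integral p (f : N.-tuple R -> \bar R) : \bar R :=
  \int[lam]_x (`|f x| `^ p * (W x)%:E).

Lemma weight_ge0 x : (0 <= W x)%R.
Proof. by apply: prodr_ge0 => a _; apply: powR_ge0. Qed.

Lemma omega_ge0 A : 0 <= om A.
Proof. by apply: integral_ge0 => x _; rewrite lee_fin weight_ge0. Qed.

Lemma cube_average_ge0 gamma a l : 0 <= cube_average gamma a l.
Proof.
rewrite mule_ge0 ?lee_fin ?powR_ge0//.
by apply: integral_ge0 => y _; rewrite lee_fin mulr_ge0 ?weight_ge0.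
Qed.

Lemma Lp_integral_ge0 p f : 0 <= Lp_integral p f.
Proof.
by apply: integral_ge0 => x _; rewrite mule_ge0 ?poweR_ge0 ?lee_fin ?weight_ge0.
Qed.

Lemma cube_average_le_hgamma gamma a l x : (0 < l)%R -> cube a l x ->
  cube_average gamma a l <= hgam gamma x.
Proof. by move=> l0 Qx; apply: ereal_sup_ubound; exists a, l. Qed.

(* every point lies in a cube, so h_gamma is a supremum of nonnegative terms *)
Lemma hgamma_ge0 gamma x : 0 <= hgam gamma x.
Proof.
have Qx : cube x 1%R x by move=> i; rewrite lexx /= lerDl.
exact: le_trans (cube_average_ge0 _ _ _) (cube_average_le_hgamma gamma x 1%R x ltr01 Qx).
Qed.

Lemma omega_level_bound p (f : N.-tuple R -> \bar R) (A : set (N.-tuple R)) c :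
  (0 <= p)%R -> (0 <= c)%R -> (forall y, A y -> c%:E <= f y) ->
  (c `^ p)%:E * om A <= Lp_integral p f.
Proof.
move=> p0 c0 cf; pose g y := (if y \in A then W y else 0%R)%:E.
have g0 y : 0 <= g y by rewrite /g lee_fin; case: ifP => // _; apply: weight_ge0.
have -> : om A = \int[lam]_y g y.
  by rewrite /omega integral_mkcond; apply: eq_integral => y _; rewrite /g /patch; case: ifP.
rewrite -ge0_integralZlT ?powR_ge0//; apply: ge0_le_integralT => y.
  by rewrite mule_ge0 ?g0 ?lee_fin ?powR_ge0.
rewrite /g; case: ifPn => [|_]; last first.
  by rewrite mule0 mule_ge0 ?poweR_ge0 ?lee_fin ?weight_ge0.
rewrite inE => Ay; apply: lee_wpmul2r; first by rewrite lee_fin weight_ge0.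
have cfy := cf y Ay; rewrite -poweR_EFin; apply: gt0_ler_poweR => //.
- by rewrite in_itv /= lee_fin c0 leey.
- by rewrite in_itv /= abse_ge0 leey.
- by apply: le_trans cfy _; apply: lee_abs.
Qed.

Section hedberg.
Variables (alpha beta p q s : R).
Hypotheses (beta0 : (0 <= beta)%R) (p0 : (0 < p)%R) (pq : (p < q)%R).
Hypothesis H0 : (0 < H)%R.
Hypothesis exponents : (p^-1 - q^-1 = (alpha - beta) / H)%R.
Hypothesis Lp_alpha : Lp_integral p (hgam alpha) = s%:E.
Local Notation th := (p^-1 - q^-1)%R.

Lemma Lp_alpha_ge0 : (0 <= s)%R.
Proof. by rewrite -lee_fin -Lp_alpha Lp_integral_ge0. Qed.

(* A number t below the average of h_alpha over a cube Q of positive measure m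
   is a lower bound of h_alpha on Q, so Chebyshev gives t^p m <= s. *)
Lemma cube_average_level a l t : (0 < l)%R -> (0 <= t)%R ->
  t%:E <= cube_average alpha a l -> (0 < fine (om (cube a l)))%R ->
  (t `^ p * fine (om (cube a l)) <= s)%R.
Proof.
move=> l0 t0 tA m0; rewrite -lee_fin -Lp_alpha EFinM.
have -> : (fine (om (cube a l)))%:E = om (cube a l).
  by apply: fineK; move: m0; case: (om (cube a l)) => //=; rewrite ltxx.
apply: omega_level_bound => //; first exact: ltW.
by move=> y Qy; apply: le_trans tA (cube_average_le_hgamma _ _ _ _ l0 Qy).
Qed.

(* Consequently the averages of h_alpha over cubes of positive measure are
   finite: an infinite one would give (s + 1) <= s. *)
Lemma cube_average_fin a l : (0 < l)%R -> (0 < fine (om (cube a l)))%R ->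
  cube_average alpha a l \is a fin_num.
Proof.
move=> l0 m0; set m := fine _ in m0.
rewrite ge0_fin_numE ?cube_average_ge0// ltey; apply/negP => /eqP Ay.
pose t := (((s + 1) / m) `^ p^-1)%R.
have := cube_average_level a l t l0 (powR_ge0 _ _); rewrite Ay leey.
move=> /(_ isT m0); rewrite -powRrM mulVf ?gt_eqF// powRr1; last first.
  by rewrite divr_ge0 ?addr_ge0 ?Lp_alpha_ge0// ltW.
by rewrite divfK ?gt_eqF// leNgt ltrDl ltr01.
Qed.

(* The average defining h_beta is omega(Q)^th times the one defining
   h_alpha, because -(1 + beta/bN) = th - (1 + alpha/bN). *)
Lemma cube_average_shift a l : (0 < fine (om (cube a l)))%R ->
  cube_average beta a l = ((fine (om (cube a l))) `^ th)%:E * cube_average alpha a l.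
Proof.
move=> m0; rewrite /cube_average muleA -EFinM -powRD; last by rewrite (gt_eqF m0) implybT.
by congr (EFin (powR _ _) * _); rewrite exponents; field; rewrite gt_eqF.
Qed.

Lemma hgamma_pointwise_bound x :
  hgam beta x <= hgam alpha x `^ (p / q) * (s `^ th)%:E.
Proof.
have rhs0 : 0 <= hgam alpha x `^ (p / q) * (s `^ th)%:E.
  by rewrite mule_ge0 ?poweR_ge0 ?lee_fin ?powR_ge0.
apply: ge_ereal_sup => _ [a [l [l0 [Qx ->]]]].
change (cube_average beta a l <= hgam alpha x `^ (p / q) * (s `^ th)%:E).
have := fine_ge0 (omega_ge0 (cube a l)); rewrite le_eqVlt => /predU1P[m0|m0].
  rewrite /cube_average -m0 powR0 ?mul0e// oppr_eq0 gt_eqF// ltr_wpDr//.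
  by rewrite divr_ge0// ltW.
set m := fine _ in m0 *.
have /fineK tE := cube_average_fin a l l0 m0; set t := fine _ in tE.
have t0 : (0 <= t)%R by rewrite -lee_fin tE cube_average_ge0.
have tms : (t `^ p * m <= s)%R by apply: cube_average_level; rewrite ?tE.
have tA : t%:E <= hgam alpha x by rewrite tE; apply: cube_average_le_hgamma.
rewrite cube_average_shift// -tE -EFinM.
move: rhs0 tA (hgamma_ge0 alpha x); case: (hgam alpha x) => [u| |]// rhs0 tu _.
  by rewrite poweR_EFin -EFinM lee_fin interpolation_bound// -lee_fin.
have [s0|s_gt0] := eqVneq s 0%R.
  have : (t `^ p * m <= 0)%R by rewrite -s0.
  rewrite pmulr_lle0// => tp0; have : (t `^ p == 0)%R by rewrite eq_le tp0 powR_ge0.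
  by rewrite powR_eq0 => /andP[/eqP-> _]; rewrite mulr0.
rewrite poweRyr; last by rewrite mulf_neq0 ?invr_neq0 ?gt_eqF// (lt_trans p0 pq).
by rewrite gt0_mulye ?leey// lte_fin powR_gt0// lt0r s_gt0 Lp_alpha_ge0.
Qed.

(* Raising the pointwise bound to the power q and integrating:
   int h_beta^q d omega <= s^(th q) int h_alpha^p d omega. *)
Lemma Lp_beta_bound : Lp_integral q (hgam beta) <= (s `^ (th * q) * s)%:E.
Proof.
have q0 : (0 < q)%R by apply: lt_trans pq.
rewrite EFinM -Lp_alpha -ge0_integralZlT ?powR_ge0//; last first.
  by move=> x; rewrite mule_ge0 ?poweR_ge0 ?lee_fin ?weight_ge0.
apply: ge0_le_integralT => x.
  by rewrite mule_ge0 ?poweR_ge0 ?lee_fin ?weight_ge0.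
rewrite muleA (muleC (s `^ _)%:E) !gee0_abs ?hgamma_ge0//.
apply: lee_wpmul2r; first by rewrite lee_fin weight_ge0.
apply: le_trans (gt0_ler_poweR (ltW q0) _ _ (hgamma_pointwise_bound x)) _.
- by rewrite in_itv /= hgamma_ge0 leey.
- by rewrite in_itv /= leey mule_ge0 ?poweR_ge0 ?lee_fin ?powR_ge0.
rewrite poweRM ?poweR_ge0 ?lee_fin ?powR_ge0// -poweRrM divfK ?gt_eqF//.
by rewrite poweR_EFin -powRrM.
Qed.

End hedberg.

(* The norm inequality ||h_beta||_{L^q_omega} <= ||h_alpha||_{L^p_omega},
   since (s^(th q) s)^(1/q) = s^(th + 1/q) = s^(1/p). *)
Lemma Lpw_hgamma_bound alpha beta p q :
  (0 <= beta)%R -> (0 < p)%R -> (p < q)%R -> (0 < H)%R ->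
  (p^-1 - q^-1 = (alpha - beta) / H)%R ->
  Lpw lam rs kappa q (hgam beta) <= Lpw lam rs kappa p (hgam alpha).
Proof.
move=> beta0 p0 pq H0 exponents; have q0 : (0 < q)%R by apply: lt_trans pq.
rewrite /Lpw -!/(Lp_integral _ _).
move: (Lp_integral_ge0 p (hgam alpha)) (@Lp_beta_bound alpha beta p q).
case: (Lp_integral p (hgam alpha)) => [s| |]// s0 bound; last first.
  by rewrite poweRyr ?invr_neq0 ?gt_eqF// leey.
have {}bound := bound s beta0 p0 pq H0 exponents erefl.
apply: le_trans (gt0_ler_poweR _ _ _ bound) _.
- by rewrite invr_ge0 ltW.
- by rewrite in_itv /= Lp_integral_ge0 leey.
- by rewrite in_itv /= leey lee_fin mulr_ge0 ?powR_ge0.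
rewrite !poweR_EFin lee_fin le_eqVlt; apply/orP; left; apply/eqP.
move: s0; rewrite lee_fin le_eqVlt => /predU1P[<-|s_gt0].
  by rewrite mulr0 !powR0// invr_eq0 gt_eqF.
rewrite -{2}(powRr1 (ltW s_gt0)) -powRD; last by rewrite (gt_eqF s_gt0) implybT.
by rewrite -powRrM; congr (powR s _); field; rewrite !gt_eqF.
Qed.

End fractional_maximal.

(* Lemma 4.7: the estimate holds with C = 1; the structure of the root
   system and the multiplicity function only enter through omega and bN. *)
Theorem lemma4p7 (R : realType) (N : nat) (rs : seq (N.-tuple R))
    (kappa : N.-tuple R -> R)
    (lam : {measure set (N.-tuple R) -> \bar R})
    (alpha beta p q : R) :
  root_system rs -> multiplicity rs kappa -> is_lebesgue lam ->
  0 <= beta -> beta < alpha -> 1 < p -> p < q ->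
  p^-1 - q^-1 = (alpha - beta) / homdim rs kappa ->
  exists C : R, 0 < C /\
    forall h : N.-tuple R -> R -> N.-tuple R -> R,
      (forall a l, 0 < l -> measurable_fun (cube a l) (h a l)) ->
      (Lpw lam rs kappa q (hgamma lam rs kappa h beta)
        <= C%:E * Lpw lam rs kappa p (hgamma lam rs kappa h alpha))%E.
Proof.
move=> _ _ _ beta0 beta_alpha p1 pq exponents.
have p0 : 0 < p by apply: lt_trans p1.
have th_gt0 : 0 < p^-1 - q^-1.
  by rewrite subr_gt0 ltf_pV2 ?posrE// (lt_trans p0 pq).
have H0 : 0 < homdim rs kappa.
  by move: th_gt0; rewrite exponents pmulr_rgt0 ?subr_gt0// invr_gt0.
exists 1; split => // h _; rewrite mul1e.
exact: Lpw_hgamma_bound.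
Qed.
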